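(* Assume the standing setting below. Let $I$ be a set independent in both $M$ and $N$ which is dually safe, let $W:=W(M/I,N/I)$ and let $B\in B(M/I,N/I,W)$. Then $I\cup B$ is a nice feasible set which is dually safe.
   Context: Standing setting: $E$ is countable, $M$ is a finitary matroid on $E$ (all circuits finite), $N$ is a matroid on $E$ that is a direct sum of a finitary and a cofinitary matroid (cofinitary = dual is finitary). $E_0$ is the union of the finitary components of $N$ (components = connected components of the circuit hypergraph) and $E_1:=E\setminus E_0$; for $F\subseteq E$, $F^j:=F\cap E_j$. $\mathring{\mathsf{span}}_M(F):=\mathsf{span}_M(F)\setminus F$. $F$ is dually safe if $F^1\subseteq\mathsf{span}_{N^*}(\mathring{\mathsf{span}}_M(F))$. Matroids are possibly infinite; $M/X:=(M^*\upharpoonright(E\setminus X))^*$, $M.X:=M/(E\setminus X)$; $r(K)=0$ means $\varnothing$ is a base of $K$. $W$ is an $(M,N)$-wave if $M\upharpoonright W$ has a base independent in $N.W$; the union of all waves is a wave, $W(M,N)$. $B(M,N,X)$ is the set of common bases of $M\upharpoonright X$ and $N.X$. $\mathsf{cond}(M,N)$: for every wave $W$, $N.W$ has an $M$-independent base; $\mathsf{cond}^+(M,N)$: $W(M,N)$ consists of $M$-loops and $r(N.W(M,N))=0$. A set $I$ independent in $M$ and $N$ is feasible if $\mathsf{cond}(M/I,N/I)$, nice feasible if moreover $\mathsf{cond}^+(M/I,N/I)$. *)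

From Stdlib Require Import List Relations.

Set Implicit Arguments.

Section Sets.
Variable E : Type.
Definition subset (A B : E -> Prop) := forall x, A x -> B x.
Definition setU (A B : E -> Prop) : E -> Prop := fun x => A x \/ B x.
Definition setI (A B : E -> Prop) : E -> Prop := fun x => A x /\ B x.
Definition setC (A : E -> Prop) : E -> Prop := fun x => ~ A x.
Definition setD (A B : E -> Prop) : E -> Prop := fun x => A x /\ ~ B x.
Definition set0 : E -> Prop := fun _ => False.
Definition setT : E -> Prop := fun _ => True.
Definition set1 (a : E) : E -> Prop := fun x => x = a.
Definition finite_set (A : E -> Prop) := exists l : list E, forall x, A x -> In x l.
Definition countable_type := exists f : E -> nat, forall x y, f x = f y -> x = y.
End Sets.

(* A matroid is given by its ground set and its independence predicate;
   the matroid axioms are imposed separately by [is_matroid]. *)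
Record matroid (E : Type) := Matroid {
  ground : E -> Prop;
  indep : (E -> Prop) -> Prop
}.

Section Matroids.
Variable E : Type.
Implicit Types (M N : matroid E) (X I J B C F W : E -> Prop).

Definition base M B :=
  indep M B /\ forall J, indep M J -> subset B J -> subset J B.

Definition is_matroid M :=
  (forall I, indep M I -> subset I (ground M)) /\
  indep M (@set0 E) /\
  (forall I J, indep M I -> subset J I -> indep M J) /\
  (forall I B, indep M I -> ~ base M I -> base M B ->
     exists x, B x /\ ~ I x /\ indep M (setU I (set1 x))) /\
  (forall I X, indep M I -> subset I X -> subset X (ground M) ->
     exists J, indep M J /\ subset I J /\ subset J X /\
       forall J', indep M J' -> subset J J' -> subset J' X -> subset J' J).

Definition dual M : matroid E :=
  Matroid (ground M)
    (fun I => subset I (ground M) /\ exists B, base M B /\ forall x, I x -> ~ B x).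

Definition restr M X : matroid E :=
  Matroid (setI (ground M) X) (fun I => indep M I /\ subset I X).

Definition contr M X : matroid E := dual (restr (dual M) (setC X)).

Definition contr_to M X : matroid E := contr M (setC X).

Definition circuit M C :=
  subset C (ground M) /\ ~ indep M C /\
  forall D, subset D C -> ~ subset C D -> indep M D.

Definition loop M (x : E) := ground M x /\ ~ indep M (set1 x).

Definition span M X : E -> Prop := fun x =>
  ground M x /\
  (X x \/ exists C, circuit M C /\ C x /\ forall y, C y -> y <> x -> X y).

Definition spano M F : E -> Prop := setD (span M F) F.

Definition finitary M := forall C, circuit M C -> finite_set C.
Definition cofinitary M := finitary (dual M).

(* N is the direct sum of a finitary and a cofinitary matroid *)
Definition fin_cofin_sum N :=
  exists P : E -> Prop,
    (forall I, indep N I <->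
       (subset I (ground N) /\ indep N (setI I P) /\ indep N (setI I (setC P)))) /\
    finitary (restr N P) /\ cofinitary (restr N (setC P)).

Definition conn N : relation E :=
  clos_refl_trans E (fun a b => exists C, circuit N C /\ C a /\ C b).
Definition component_of N (y : E) : E -> Prop := fun z => conn N y z.

Definition E0 N : E -> Prop := fun x =>
  exists y, component_of N y x /\ finitary (restr N (component_of N y)).
Definition E1 N : E -> Prop := setC (E0 N).

Definition dually_safe M N F :=
  forall x, F x -> E1 N x -> span (dual N) (spano M F) x.

Definition wave M N W :=
  subset W (ground M) /\
  exists B, base (restr M W) B /\ indep (contr_to N W) B.

(* W(M,N): the union of all waves *)
Definition Wmax M N : E -> Prop := fun x => exists W, wave M N W /\ W x.

(* B(M,N,X): common bases of M|X and N.X *)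
Definition Bset M N X B := base (restr M X) B /\ base (contr_to N X) B.

Definition cond M N :=
  forall W, wave M N W -> exists B, base (contr_to N W) B /\ indep M B.

(* r(K) = 0 means the empty set is a base of K *)
Definition cond_plus M N :=
  (forall x, Wmax M N x -> loop M x) /\
  base (contr_to N (Wmax M N)) (@set0 E).

Definition feasible M N I :=
  indep M I /\ indep N I /\ cond (contr M I) (contr N I).

Definition nice_feasible M N I :=
  feasible M N I /\ cond_plus (contr M I) (contr N I).

End Matroids.

From Stdlib Require Import Classical FunctionalExtensionality PropExtensionality.

(** Since [B] is independent in [M/I] and in [N/I], contracting [Z = I + B]
    is contracting [I] and then [B] ([contr_contr]).  So for [cond] and
    [cond⁺] it suffices to study a pair [(M',N')] and a common base
    [B ∈ B(M',N',W(M',N'))]: a wave [Y] of [(M'/B,N'/B)] glues onto [W] into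
    the wave [W + Y] of [(M',N')], so [Y ⊆ W - B]; on [W - B] the matroid
    [M'/B] has only loops ([B] is maximal in [M'|W]) and [(N'/B).Y] has rank
    zero ([B] is maximal in [N'.W]).  For dual safety, the loops of [M/Z]
    lie in [span° M Z], each [b ∈ B] lies in the [N]-dual span of [W - B],
    and transitivity of the dual span handles the elements of [I]. *)

Definition remx {E : Type} (A : E -> Prop) (x : E) : E -> Prop := fun z => A z /\ z <> x.

Definition disj {E : Type} (A B : E -> Prop) := forall x, A x -> ~ B x.

Ltac set_unfold :=
  unfold subset, setU, setI, setC, setD, set1, set0, setT, remx, disj in *.

Section Basics.
Context {E : Type}.
Implicit Types (X Z J K A : E -> Prop).

Definition max_indep (M : matroid E) Z J :=
  indep M J /\ subset J Z /\
  forall J', indep M J' -> subset J J' -> subset J' Z -> subset J' J.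

Lemma max_indep_restr (M : matroid E) Z J :
  base (restr M Z) J <-> max_indep M Z J.
Proof.
  unfold base, max_indep; simpl. split.
  - intros [[hJ hJZ] hm]. repeat split; auto.
  - intros (hJ & hJZ & hm). repeat split; auto. intros J' [h1 h2]. auto.
Qed.

Context {M : matroid E} (hM : is_matroid M).

Lemma indep_sub {A C : E -> Prop} : indep M A -> subset C A -> indep M C.
Proof. destruct hM as (_&_&h&_). eauto. Qed.

Lemma indep_ground {A : E -> Prop} : indep M A -> subset A (ground M).
Proof. destruct hM as (h&_). eauto. Qed.

Lemma indep_empty : indep M (@set0 E).
Proof. destruct hM as (_&h&_). exact h. Qed.

Lemma base_indep {B : E -> Prop} : base M B -> indep M B.
Proof. intros [h _]; auto. Qed.

Lemma max_indep_extend I0 Z :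
  indep M I0 -> subset I0 Z -> exists J, max_indep M Z J /\ subset I0 J.
Proof.
  intros hI hs. pose proof hM as (h1&_&_&_&hIM).
  destruct (hIM I0 (fun x => Z x /\ ground M x)) as (J&hJ&h0&hJX&hmax); auto.
  - intros x hx. split; auto. eapply h1; eauto.
  - intros x [_ hx]; auto.
  - exists J. split; auto. split; auto. split.
    + intros x hx; apply hJX; auto.
    + intros J' h' h'' h'''. apply hmax; auto. intros x hx; split; auto. eapply h1; eauto.
Qed.

Lemma max_indep_exists Z : exists J, max_indep M Z J.
Proof.
  destruct (max_indep_extend (@set0 E) Z indep_empty) as (J&hJ&_). intros x [].
  eauto.
Qed.

Lemma max_indep_self Z : indep M Z -> max_indep M Z Z.
Proof. intros h. split; auto. split; [set_unfold; auto|]. intros J' _ _ h'; auto. Qed.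

Lemma max_indep_eq Z J J' :
  max_indep M Z J -> subset J J' -> subset J' J -> max_indep M Z J'.
Proof.
  intros (h1&h2&h3) s1 s2. split; [apply (indep_sub h1 s2)|]. split.
  - intros x hx; auto.
  - intros K hK hs hKZ x hx. apply s1. apply (h3 K hK); auto. intros y hy; auto.
Qed.

Lemma max_indep_union P T JP Q :
  max_indep M P JP -> indep M (setU JP Q) -> subset P T -> subset Q T ->
  (forall w, T w -> ~ Q w -> P w) -> max_indep M T (setU JP Q).
Proof.
  intros (hJPi&hJPs&hJPm) hi hPT hQT hTP. split; [auto|split].
  - intros y [h|h]; auto.
  - intros J hJ hs hJT w hw. destruct (classic (Q w)) as [hq|hq]; [right; auto|left].
    apply (hJPm (fun z => J z /\ P z)); [| |intros y (_&h); auto|split; auto].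
    + apply (indep_sub hJ). intros y (h&_); auto.
    + intros y hy. split; auto. apply hs. left; auto.
Qed.

Lemma max_indep_of_dependent_ext J y :
  indep M J -> ~ indep M (setU J (set1 y)) -> max_indep M (setU J (set1 y)) J.
Proof.
  intros hJ hdep. split; auto. split; [set_unfold; auto|].
  intros J' hJ' hs hs' x hx. destruct (hs' x hx) as [h|h]; auto. subst.
  exfalso; apply hdep. apply (indep_sub hJ'). set_unfold. intros z [h0|h0]; subst; auto.
Qed.

Lemma base_exists : exists B, base M B.
Proof.
  destruct (max_indep_exists (ground M)) as (B&hB&_&hm). exists B. split; auto.
  intros J hJ hs. apply hm; auto. eapply indep_ground; eauto.
Qed.

Lemma base_of_no_extension J :
  indep M J -> (forall z, indep M (setU J (set1 z)) -> J z) -> base M J.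
Proof.
  intros hJ hn. apply NNPP. intros hb.
  destruct base_exists as (B0&hB0).
  pose proof hM as (_&_&_&hI3&_).
  destruct (hI3 J B0 hJ hb hB0) as (x&_&hx&hi). apply hx. auto.
Qed.

Lemma base_of_max_indep_sup {X J B0 : E -> Prop} :
  max_indep M X J -> base M B0 -> subset B0 X -> base M J.
Proof.
  intros (hJ&hJX&hm) hB0 hs. apply NNPP; intro hb.
  pose proof hM as (_&_&_&hI3&_).
  destruct (hI3 J B0 hJ hb hB0) as (z&hz&hnz&hi).
  apply hnz. apply (hm _ hi); set_unfold; auto. intros y [h|h]; subst; auto.
Qed.

Lemma base_eq {A A' : E -> Prop} : base M A -> subset A A' -> subset A' A -> base M A'.
Proof.
  intros [hA hm] h1 h2. split.
  - eapply indep_sub; eauto.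
  - intros J hJ hs. intros x hx. apply h1. apply (hm J hJ); auto.
    intros y hy; apply hs; apply h1; auto.
Qed.

Lemma remx_not_base {B1 : E -> Prop} {x : E} : base M B1 -> B1 x -> ~ base M (remx B1 x).
Proof.
  intros hB hx [_ hm]. assert (h := hm B1 (base_indep hB)).
  assert (hs : subset (remx B1 x) B1) by (set_unfold; tauto).
  destruct (h hs x hx) as [_ h']; auto.
Qed.

Lemma base_exchange B1 x c :
  base M B1 -> B1 x -> ~ B1 c -> indep M (setU (remx B1 x) (set1 c)) ->
  base M (setU (remx B1 x) (set1 c)).
Proof.
  intros hB hx hc hi. apply NNPP; intro hnb.
  pose proof hM as (_&_&_&hI3&_).
  destruct (hI3 _ B1 hi hnb hB) as (z&hz&hnz&hiz).
  assert (z = x).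
  { apply NNPP; intro hne. apply hnz. left. split; auto. }
  subst z. apply hc. destruct hB as [_ hm].
  apply (hm (setU B1 (set1 c))).
  - eapply indep_sub; eauto. set_unfold. intros y [hy|hy]; [|left; right; auto].
    destruct (classic (y = x)); [right; auto| left; left; auto].
  - set_unfold; auto.
  - set_unfold; auto.
Qed.

Lemma max_indep_to_base Z J :
  max_indep M Z J -> exists B1, base M B1 /\ subset J B1 /\ (forall x, B1 x -> Z x -> J x).
Proof.
  intros hJ. pose proof hJ as (hJi&hJZ&hJm).
  destruct (max_indep_extend J (fun z => J z \/ ~ Z z) hJi) as (J'&hJ'&hs).
  { set_unfold; auto. }
  pose proof hJ' as (hJ'i&hJ'X&hJ'm).
  assert (hb : base M J').
  { apply base_of_no_extension; auto. intros z hz.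
    destruct (classic (Z z)) as [hZ|hZ].
    - apply hs. apply (hJm (setU J (set1 z))); set_unfold; auto.
      + apply (indep_sub hz). set_unfold. intros w [h|h]; subst; auto.
      + intros w [h|h]; subst; auto.
    - apply (hJ'm _ hz); set_unfold; auto. intros w [h|h]; subst; auto. }
  exists J'. split; auto. split; auto. intros x hx hZ. destruct (hJ'X x hx); tauto.
Qed.

End Basics.

(** By definition [M/Z] is [(M^* | (E - Z))^*]; we describe its
    independent sets through maximal independent subsets of [Z]: if [JZ] is
    one, then [J] is independent in [M/Z] iff [J] avoids [Z] and [J + JZ] is
    independent in [M].  The bridge is the description of the bases of
    [M^* | (E - Z)] as the complements (outside [Z]) of bases [B] of [M] for
    which [B ∩ Z] is a maximal independent subset of [Z]. *)
Section Contraction.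
Context {E : Type} {M : matroid E} (hM : is_matroid M).
Implicit Types (X Z J K A B : E -> Prop).

Lemma dual_restr_base_of_base B Z :
  base M B -> max_indep M Z (setI B Z) ->
  base (restr (dual M) (setC Z)) (fun x => ground M x /\ ~ Z x /\ ~ B x).
Proof.
  intros hB hBZ. split.
  - simpl. split; [split|].
    + intros x (h&_); auto.
    + exists B. split; auto. intros x (_&_&h); auto.
    + intros x (_&h&_); auto.
  - simpl. intros J' ((hJG&B'&hB'&hd)&hJZ) hS x hx.
    split; [auto|split; [apply hJZ; auto|]]. intro hBx.
    pose proof hM as (_&_&_&hI3&_).
    assert (hi : indep M (remx B x)).
    { apply (indep_sub hM (base_indep hB)). set_unfold; tauto. }
    destruct (hI3 _ B' hi (remx_not_base hB hBx) hB') as (y&hy&hny&hiy).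
    assert (hyx : y <> x). { intro; subst. apply (hd x hx hy). }
    assert (hBy : ~ B y). { intro. apply hny. set_unfold. auto. }
    assert (hZy : Z y).
    { apply NNPP; intro hZ. apply (hd y); auto. apply hS. split; [|auto].
      apply (indep_ground hM (base_indep hB') _ hy). }
    destruct hBZ as (_&_&hm).
    assert (hzx : ~ Z x) by (apply hJZ; auto).
    apply hBy. refine (proj1 (hm (setU (setI B Z) (set1 y)) _ _ _ y _)).
    + apply (indep_sub hM hiy). set_unfold.
      intros z [[h1 h2]|h1]; [left; split; auto|right; auto]. intro; subst; auto.
    + set_unfold; auto.
    + set_unfold. intros z [[h1 h2]|h1]; subst; auto.
    + set_unfold; auto.
Qed.

Lemma max_indep_of_dual_restr_base B Z S :
  base M B -> base (restr (dual M) (setC Z)) S ->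
  (forall x, S x <-> (ground M x /\ ~ Z x /\ ~ B x)) ->
  max_indep M Z (setI B Z).
Proof.
  intros hB [((hSG&_)&hSZ) hm] hiff. simpl in hm.
  assert (hd : forall x, S x -> ~ B x) by (intros x hx; apply hiff in hx; tauto).
  split; [apply (indep_sub hM (base_indep hB)); set_unfold; tauto|].
  split; [set_unfold; tauto|].
  intros K hK hBK hKZ y hy. split; [|apply hKZ; auto].
  apply NNPP; intro hBy.
  assert (hI0 : indep M (setU (setI B Z) (set1 y))).
  { apply (indep_sub hM hK). set_unfold. intros z [hz|hz]; subst; auto. }
  destruct (max_indep_extend hM _ (setU B (set1 y)) hI0) as (J'&hJ'&hs).
  { set_unfold. intros z [[h1 _]|h1]; auto. }
  assert (hbJ : base M J').
  { apply (base_of_max_indep_sup hM hJ' hB). set_unfold; auto. }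
  assert (hnot : ~ subset B J').
  { intro hBJ. apply hBy. destruct hB as [_ hmB].
    apply (hmB (setU B (set1 y))); [|set_unfold; auto|set_unfold; auto].
    apply (indep_sub hM (base_indep hbJ)). set_unfold.
    intros z [h|h]; subst; auto. }
  apply not_all_ex_not in hnot. destruct hnot as (x&hx).
  apply imply_to_and in hx. destruct hx as (hBx&hJx).
  assert (hZx : ~ Z x). { intro hZ. apply hJx. apply hs. left. split; auto. }
  apply (hd x); [|auto].
  refine (hm (setU S (set1 x)) _ _ x _); [|set_unfold; auto|set_unfold; auto].
  split; [split|].
  - set_unfold. intros z [h|h]; subst; auto.
    apply (indep_ground hM (base_indep hB) _ hBx).
  - exists J'. split; auto. set_unfold. intros z [h|h] hz; subst; auto.
    destruct hJ' as (_&hJX&_). destruct (hJX z hz) as [h'|h'].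
    + apply (hd z); auto.
    + subst. apply hSZ in h. apply h. apply hKZ. auto.
  - set_unfold. intros z [h|h]; subst; auto; apply hSZ; auto.
Qed.

Lemma dual_restr_base_inv S Z :
  base (restr (dual M) (setC Z)) S ->
  exists B, base M B /\ max_indep M Z (setI B Z) /\
    (forall x, S x <-> (ground M x /\ ~ Z x /\ ~ B x)).
Proof.
  intros hS. pose proof hS as [((hSG&B&hB&hd)&hSZ) hm]. simpl in hm.
  assert (hiff : forall x, S x <-> (ground M x /\ ~ Z x /\ ~ B x)).
  { intro x; split.
    - intro hx. split; auto. split; [apply hSZ; auto|apply hd; auto].
    - intro hx. refine (hm (fun x => ground M x /\ ~ Z x /\ ~ B x) _ _ x hx).
      + split; [split|].
        * intros y (h&_); auto.
        * exists B; split; auto. intros y (_&_&h); auto.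
        * intros y (_&h&_); auto.
      + intros y hy. split; auto. split; [apply hSZ; auto|apply hd; auto]. }
  exists B. split; [auto|split; [|auto]].
  exact (max_indep_of_dual_restr_base _ _ _ hB hS hiff).
Qed.

Lemma base_swap B1 Z J2 :
  base M B1 -> max_indep M Z (setI B1 Z) -> max_indep M Z J2 ->
  base M (fun x => J2 x \/ (B1 x /\ ~ Z x)).
Proof.
  intros hB1 hB1Z hJ2.
  set (X := fun x => J2 x \/ (B1 x /\ ~ Z x)).
  destruct (max_indep_extend hM J2 X) as (J'&hJ'&hs).
  { destruct hJ2 as (h&_); auto. }
  { unfold X; set_unfold; auto. }
  pose proof hM as (_&_&_&hI3&_).
  pose proof hJ2 as (_&hJ2Z&hJ2m).
  assert (hbJ : base M J').
  { apply NNPP; intro hb. destruct hJ' as (hJ'i&hJ'X&hJ'm).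
    destruct (hI3 J' B1 hJ'i hb hB1) as (z&hz&hnz&hi).
    apply hnz. destruct (classic (Z z)) as [hZ|hZ].
    - apply hs. apply (hJ2m (setU J2 (set1 z))); set_unfold; auto.
      + apply (indep_sub hM hi). set_unfold. intros w [h|h]; subst; auto.
      + intros w [h|h]; subst; auto.
    - apply (hJ'm _ hi); set_unfold; auto. intros w [h|h]; subst; auto.
      unfold X; auto. }
  assert (hJZ : max_indep M Z (setI J' Z)).
  { split; [apply (indep_sub hM (base_indep hbJ)); set_unfold; tauto|].
    split; [set_unfold; tauto|].
    intros K hK hs' hKZ x hx. split; [|auto].
    apply hs. refine (hJ2m K hK _ hKZ x hx). intros y hy. apply hs'. split; auto. }
  pose proof (dual_restr_base_of_base _ _ hbJ hJZ) as hS'.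
  pose proof (dual_restr_base_of_base _ _ hB1 hB1Z) as [_ hm1].
  apply (base_eq hM hbJ); [destruct hJ' as (_&h&_); auto|].
  intros x [hx|(hx&hZx)]; [apply hs; auto|].
  apply NNPP; intro hJx.
  assert (h : (fun x => ground M x /\ ~ Z x /\ ~ J' x) x).
  { split; [apply (indep_ground hM (base_indep hB1) _ hx)|auto]. }
  refine (proj2 (proj2 (hm1 _ (proj1 hS') _ x h)) hx).
  intros y (hy1&hy2&hy3). split; auto. split; auto. intro hJy.
  destruct hJ' as (_&hJX&_). destruct (hJX y hJy) as [h'|h']; [|tauto].
  auto.
Qed.

Lemma contr_indep_union Z J JZ :
  indep (contr M Z) J -> max_indep M Z JZ -> indep M (setU J JZ).
Proof.
  intros hJ hJZ. simpl in hJ. destruct hJ as (hJs&S&hS&hd).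
  destruct (dual_restr_base_inv _ _ hS) as (B&hB&hBZ&hiff).
  pose proof (base_swap _ _ _ hB hBZ hJZ) as hb.
  apply (indep_sub hM (base_indep hb)). intros x [hx|hx]; auto.
  right. destruct (hJs x hx) as (hG&hZ). split; auto.
  apply NNPP; intro hBx. apply (hd x hx). apply hiff. auto.
Qed.

Lemma contr_indep_intro Z J JZ :
  subset J (fun x => ground M x /\ ~ Z x) -> max_indep M Z JZ -> indep M (setU J JZ) ->
  indep (contr M Z) J.
Proof.
  intros hJs hJZ hi.
  destruct (max_indep_extend hM _ (ground M) hi) as (B&hB&hs).
  { apply (indep_ground hM); auto. }
  assert (hbB : base M B).
  { destruct hB as (hBi&_&hBm). split; auto. intros K hK hBK.
    apply hBm; auto. apply (indep_ground hM hK). }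
  assert (hBZ : max_indep M Z (setI B Z)).
  { split; [apply (indep_sub hM (base_indep hbB)); set_unfold; tauto|].
    split; [set_unfold; tauto|].
    intros K hK hs' hKZ x hx. destruct hJZ as (hJ&hJZs&hm).
    assert (hJK : subset JZ K). { intros y hy. apply hs'. split; [apply hs; right; auto|auto]. }
    split; [apply hs; right; apply (hm K hK hJK hKZ); auto|auto]. }
  simpl. split.
  - intros x hx. destruct (hJs x hx); split; auto.
  - eexists. split; [exact (dual_restr_base_of_base _ _ hbB hBZ)|].
    intros x hx (_&_&h). apply h. apply hs. left; auto.
Qed.

Lemma contr_indep_mono Z Z' J :
  subset Z' Z -> indep (contr M Z) J -> indep (contr M Z') J.
Proof.
  intros hZ hJ.
  destruct (max_indep_exists hM Z') as (JZ'&hJZ').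
  destruct (max_indep_extend hM JZ' Z) as (JZ&hJZ&hs).
  { destruct hJZ' as (h&_); auto. }
  { destruct hJZ' as (_&h&_); intros x hx; auto. }
  pose proof (contr_indep_union _ _ _ hJ hJZ) as hi.
  apply (contr_indep_intro Z' J JZ'); auto.
  - simpl in hJ. destruct hJ as (hJs&_). intros x hx. destruct (hJs x hx) as (h1&h2).
    split; auto.
  - apply (indep_sub hM hi). set_unfold. intros x [h|h]; auto.
Qed.

Lemma contr_indep_ground Z J :
  indep (contr M Z) J -> forall x, J x -> ground M x /\ ~ Z x.
Proof. intros [hJ _]. exact hJ. Qed.

Lemma contr_indep_sub Z J : indep (contr M Z) J -> indep M J.
Proof.
  intros hJ. destruct (max_indep_exists hM Z) as (JZ&hJZ).
  apply (indep_sub hM (contr_indep_union _ _ _ hJ hJZ)). set_unfold; auto.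
Qed.

Lemma contr_indep_empty Z : indep (contr M Z) (@set0 E).
Proof.
  destruct (max_indep_exists hM Z) as (JZ&hJZ).
  apply (contr_indep_intro _ _ JZ); [intros x []|auto|].
  apply (indep_sub hM (proj1 hJZ)). intros x [[]|h]; auto.
Qed.

Lemma contr_indep_iff Z J :
  indep M Z -> (indep (contr M Z) J <-> (disj J Z /\ indep M (setU J Z))).
Proof.
  intros hZ. split.
  - intros hJ. split.
    + intros x hx. apply (contr_indep_ground _ _ hJ x hx).
    + apply (contr_indep_union Z J Z hJ (max_indep_self Z hZ)).
  - intros (hd&hi). apply (contr_indep_intro Z J Z); auto.
    + intros x hx. split; [apply (indep_ground hM hi); left; auto|apply hd; auto].
    + apply max_indep_self; auto.
Qed.

Lemma indep_union_of_contr Z J :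
  indep M Z -> indep (contr M Z) J -> indep M (setU Z J).
Proof.
  intros hZ hJ. apply (contr_indep_iff Z J hZ) in hJ. destruct hJ as (_&hJ).
  apply (indep_sub hM hJ). set_unfold. tauto.
Qed.

Lemma contr_base_iff Z B' :
  indep M Z -> (base (contr M Z) B' <-> (disj B' Z /\ base M (setU B' Z))).
Proof.
  intros hZ. split.
  - intros [hi hm]. apply (contr_indep_iff Z B' hZ) in hi. destruct hi as (hd&hi).
    split; auto. apply (base_of_no_extension hM); auto.
    intros z hz. destruct (classic (Z z)) as [h|h]; [right; auto|left].
    apply (hm (setU B' (set1 z))); set_unfold; auto.
    apply (contr_indep_iff Z _ hZ). split.
    + set_unfold. intros x [hx|hx]; subst; auto.
    + apply (indep_sub hM hz). set_unfold. intros x [[hx|hx]|hx]; subst; auto.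
  - intros (hd&hb). split.
    + apply (contr_indep_iff Z B' hZ). split; auto. apply base_indep; auto.
    + intros J hJ hs x hx. apply (contr_indep_iff Z J hZ) in hJ. destruct hJ as (hdJ&hJ).
      destruct hb as [_ hm].
      assert (h : subset (setU B' Z) (setU J Z)). { set_unfold. intros y [hy|hy]; auto. }
      destruct (hm _ hJ h x (or_introl hx)) as [h'|h']; auto. exfalso; apply (hdJ x); auto.
Qed.

Lemma contr_augment Z I0 B0 :
  indep M Z -> indep (contr M Z) I0 -> ~ base (contr M Z) I0 -> base (contr M Z) B0 ->
  exists x, B0 x /\ ~ I0 x /\ indep (contr M Z) (setU I0 (set1 x)).
Proof.
  intros hZ hI hnb hB.
  apply (contr_base_iff Z _ hZ) in hB. destruct hB as (hdB&hB).
  apply (contr_indep_iff Z _ hZ) in hI. destruct hI as (hd&hi).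
  assert (hnb' : ~ base M (setU I0 Z)).
  { intro hb. apply hnb. apply (contr_base_iff Z _ hZ). auto. }
  pose proof hM as (_&_&_&hI3&_).
  destruct (hI3 _ _ hi hnb' hB) as (x&hx&hnx&hix).
  assert (hZx : ~ Z x). { intro; apply hnx; right; auto. }
  exists x. split; [destruct hx; auto; tauto|]. split; [intro; apply hnx; left; auto|].
  apply (contr_indep_iff Z _ hZ). split.
  - set_unfold. intros y [hy|hy]; subst; auto.
  - apply (indep_sub hM hix). set_unfold. intros y [[hy|hy]|hy]; subst; auto.
Qed.

(** Axiom (IM) for [M/Z]: extend [I0 + Z] maximally inside [X + Z] and drop [Z]. *)
Lemma contr_max_extend Z I0 X :
  indep M Z -> indep (contr M Z) I0 -> subset I0 X ->
  exists J, indep (contr M Z) J /\ subset I0 J /\ subset J X /\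
    forall J', indep (contr M Z) J' -> subset J J' -> subset J' X -> subset J' J.
Proof.
  intros hZ hI hIX. pose proof (fun J => contr_indep_iff Z J hZ) as hiff.
  pose proof (proj1 (hiff _) hI) as (hd&hi).
  destruct (max_indep_extend hM _ (setU X Z) hi) as (K&(hKi&hKX&hKm)&hs).
  { set_unfold. intros x [h|h]; auto. }
  exists (fun x => K x /\ ~ Z x). split; [|split; [|split]].
  - apply hiff. split; [set_unfold; tauto|].
    apply (indep_sub hM hKi). set_unfold. intros x [[h _]|h]; auto.
  - intros x hx. split; [apply hs; left; auto|apply hd; auto].
  - intros x (h1&h2). destruct (hKX x h1); auto. tauto.
  - intros J' hJ' hs' hJX x hx.
    pose proof (proj1 (hiff _) hJ') as (hd'&hi').
    split; [|apply hd'; auto].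
    apply (hKm _ hi'); [|set_unfold; intros y [h|h]; auto|left; auto].
    set_unfold. intros y hy. destruct (classic (Z y)); auto; left; apply hs'; split; auto.
Qed.

Lemma contr_matroid Z : indep M Z -> is_matroid (contr M Z).
Proof.
  intros hZ. split; [|split; [|split; [|split]]].
  - intros J hJ x hx. exact (contr_indep_ground _ _ hJ x hx).
  - apply contr_indep_empty.
  - intros I0 J hI hs. apply (contr_indep_iff Z _ hZ) in hI. destruct hI as (hd&hi).
    apply (contr_indep_iff Z _ hZ). split; [set_unfold; auto|].
    apply (indep_sub hM hi). set_unfold. intros x [h|h]; auto.
  - intros I0 B0. apply contr_augment; auto.
  - intros I0 X hI hIX _. apply contr_max_extend; auto.
Qed.

Lemma max_indep_contr X Z J :
  indep M X -> max_indep M Z J -> disj J X -> indep M (setU J X) ->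
  max_indep (contr M X) Z J.
Proof.
  intros hX (hJ&hJZ&hJm) hd hi. split; [apply (contr_indep_iff X J hX); auto|].
  split; [auto|]. intros J' hJ' hs hs'.
  apply hJm; auto. exact (contr_indep_sub _ _ hJ').
Qed.

Lemma base_contr_union Z B J :
  base (contr M Z) B -> max_indep M Z J -> base M (setU B J).
Proof.
  intros [hB hBm] hJ. pose proof hJ as (hJi&hJZ&hJm).
  apply (base_of_no_extension hM); [exact (contr_indep_union _ _ _ hB hJ)|].
  intros z hz. destruct (classic (Z z)) as [hZz|hZz].
  - right. apply (hJm (setU J (set1 z))); set_unfold; auto.
    + apply (indep_sub hM hz). set_unfold. intros y [h|h]; subst; auto.
    + intros y [h|h]; subst; auto.
  - left. apply (hBm (setU B (set1 z))); set_unfold; auto.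
    apply (contr_indep_intro Z _ J); auto.
    + intros y [h|h]; [apply (contr_indep_ground _ _ hB y h)|subst].
      split; auto. apply (indep_ground hM hz). right; reflexivity.
    + apply (indep_sub hM hz). set_unfold. intros y [[h|h]|h]; subst; auto.
Qed.

End Contraction.

Lemma matroid_ext {E : Type} (M1 M2 : matroid E) :
  (forall x, ground M1 x <-> ground M2 x) ->
  (forall J, indep M1 J <-> indep M2 J) -> M1 = M2.
Proof.
  destruct M1 as [g1 i1], M2 as [g2 i2]; simpl. intros hg hi.
  assert (g1 = g2) by (apply functional_extensionality; intro; apply propositional_extensionality; auto).
  assert (i1 = i2) by (apply functional_extensionality; intro; apply propositional_extensionality; auto).
  subst. reflexivity.
Qed.

Lemma contr_contr {E : Type} {M : matroid E} (hM : is_matroid M) I B :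
  indep M I -> indep (contr M I) B -> contr (contr M I) B = contr M (setU I B).
Proof.
  intros hI hB. pose proof (contr_matroid hM I hI) as hM'.
  pose proof (indep_union_of_contr hM I B hI hB) as hIB.
  apply matroid_ext.
  - intro x. simpl. set_unfold. tauto.
  - intro J. rewrite (contr_indep_iff hM' B J hB), (contr_indep_iff hM _ J hIB),
      (contr_indep_iff hM I _ hI).
    split.
    + intros (hd&hd'&hi). split; [set_unfold; firstorder|].
      apply (indep_sub hM hi). set_unfold. tauto.
    + intros (hd&hi). split; [set_unfold; firstorder|]. split; [set_unfold; firstorder|].
      apply (indep_sub hM hi). set_unfold. tauto.
Qed.

(** If [J] is independent but [J + y] is not, then
    [y] together with the elements [z] of [J] for which [J - z + y] is
    independent forms a circuit; hence [y] is spanned by [J]. *)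
Section Circuits.
Context {E : Type} {M : matroid E} (hM : is_matroid M).
Implicit Types (X Z J K A : E -> Prop).

Definition fund_circuit J (y : E) : E -> Prop :=
  fun z => z = y \/ (J z /\ indep M (setU (remx J z) (set1 y))).

(** The main point: the candidate is dependent.  Otherwise extend it inside
    [J + y] to a base [B1] of [M] and compare [B1] with the base obtained by
    swapping its [(J + y)]-part for [J]. *)
Lemma fund_circuit_dependent J y :
  indep M J -> ~ indep M (setU J (set1 y)) -> ~ indep M (fund_circuit J y).
Proof.
  intros hJ hdep hC. set (C := fund_circuit J y) in *. set (Z0 := setU J (set1 y)).
  destruct (max_indep_extend hM C Z0 hC) as (K&hK&hCK).
  { unfold C, Z0, fund_circuit; set_unfold. intros z [h|(h&_)]; auto. }
  destruct (max_indep_to_base hM _ _ hK) as (B1&hB1&hKB&hBK).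
  assert (hB1Z : max_indep M Z0 (setI B1 Z0)).
  { apply (max_indep_eq hM _ _ _ hK).
    - intros x hx. split; auto. destruct hK as (_&h&_); auto.
    - intros x (h1&h2); auto. }
  pose proof (base_swap hM B1 Z0 J hB1 hB1Z (max_indep_of_dependent_ext hM J y hJ hdep)) as hB2.
  (* some [d] of [J] is missing from [K], otherwise [J + y ⊆ K] would be independent *)
  assert (hnot : ~ subset J K).
  { intro hs. apply hdep. destruct hK as (hKi&_). apply (indep_sub hM hKi).
    set_unfold. intros z [h|h]; subst; auto. apply hCK. left; auto. }
  apply not_all_ex_not in hnot. destruct hnot as (d&hd).
  apply imply_to_and in hd. destruct hd as (hJd&hKd).
  set (Ind := fun z => remx J d z \/ (B1 z /\ ~ Z0 z)).
  assert (hInd : indep M Ind).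
  { apply (indep_sub hM (base_indep hB2)). unfold Ind; set_unfold. intros z [(h&_)|h]; auto. }
  assert (hnb : ~ base M Ind).
  { intros [_ hm]. assert (h := hm _ (base_indep hB2)).
    assert (hs : subset Ind (fun x => J x \/ (B1 x /\ ~ Z0 x))).
    { unfold Ind; set_unfold. intros z [(h1&_)|h1]; auto. }
    destruct (h hs d (or_introl hJd)) as [(_&h2)|(_&h2)]; auto.
    apply h2. left; auto. }
  (* the element re-added to [Ind] from [B1] must be [y], showing [d ∈ C ⊆ K] *)
  pose proof hM as (_&_&_&hI3&_).
  destruct (hI3 _ _ hInd hnb hB1) as (x&hx&hnx&hix).
  assert (hZx : Z0 x). { apply NNPP; intro h. apply hnx. right; auto. }
  assert (hKx : K x) by auto.
  assert (hxy : x = y).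
  { destruct hZx as [h|h]; auto. exfalso. apply hnx. left. split; auto.
    intro; subst; auto. }
  subst x. apply hKd. apply hCK. right. split; auto.
  apply (indep_sub hM hix). unfold Ind; set_unfold. intros z [h|h]; auto.
Qed.

Lemma fund_circuit_circuit J y :
  indep M J -> ~ indep M (setU J (set1 y)) -> ground M y -> circuit M (fund_circuit J y).
Proof.
  intros hJ hdep hy. split; [|split].
  - intros x [h|(h&_)]; [subst; auto|apply (indep_ground hM hJ _ h)].
  - apply fund_circuit_dependent; auto.
  - intros D hD hnD. apply not_all_ex_not in hnD. destruct hnD as (c&hc).
    apply imply_to_and in hc. destruct hc as (hCc&hDc).
    destruct hCc as [hc|(hJc&hic)].
    + subst. apply (indep_sub hM hJ). intros z hz. destruct (hD z hz) as [h|(h&_)]; auto.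
      subst; tauto.
    + apply (indep_sub hM hic). intros z hz. destruct (hD z hz) as [h|(h&_)].
      * right; auto.
      * left. split; auto. intro; subst; tauto.
Qed.

Lemma span_mono X Y x : subset X Y -> span M X x -> span M Y x.
Proof.
  intros hs (hg&[hX|(C&hC&hCx&hCX)]); split; auto.
  right. exists C. split; auto.
Qed.

Lemma loop_contr_spano Z y : indep M Z -> loop (contr M Z) y -> spano M Z y.
Proof.
  intros hZ ((hg&hZy)&hnl). split; [split; [auto|right]|auto].
  assert (hdep : ~ indep M (setU Z (set1 y))).
  { intro hi. apply hnl. apply (contr_indep_iff hM Z _ hZ). split.
    - intros x hx. unfold set1 in hx. subst. auto.
    - apply (indep_sub hM hi). set_unfold. tauto. }
  exists (fund_circuit Z y). split; [apply fund_circuit_circuit; auto|].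
  split; [left; auto|]. intros z [h|(h&_)] hzy; [contradiction|auto].
Qed.

End Circuits.

Arguments fund_circuit {E} M J y.

(** For [x ∉ X] we use two reformulations of
    [x ∈ span N^* X], both in terms of [N] alone:
    - [exchange_closed N X x]: some base of [N] contains [x] and every
      element exchangeable for [x] in it lies in [X];
    - [coloop_rel N X x]: [x] is independent in [N / (E - X - x)], i.e. not
      spanned by [E - X - x].
    The first one turns dual circuits into statements about bases, the second
    one makes transitivity of the dual span provable. *)
Section DualSpan.
Context {E : Type} {N : matroid E} (hN : is_matroid N) (hG : forall x, ground N x).
Implicit Types (X Y Z J K L : E -> Prop).

Definition exchange_closed X (x : E) :=
  exists B1, base N B1 /\ B1 x /\
    forall z, ~ B1 z -> indep N (setU (remx B1 x) (set1 z)) -> X z.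

Definition coloop_rel X (x : E) :=
  indep (contr N (fun z => ~ X z /\ z <> x)) (set1 x).

(** The fundamental cocircuit of [x] with respect to [B1] witnesses [x ∈ span N^* X]. *)
Lemma dspan_of_exchange X x : exchange_closed X x -> span (dual N) X x.
Proof.
  intros (B1&hB1&hx&hQ). split; [apply hG|]. right.
  set (C := fun z => z = x \/ (~ B1 z /\ indep N (setU (remx B1 x) (set1 z)))).
  exists C. split; [split; [|split]|split].
  - intros y _; apply hG.
  - intros (_&B'&hB'&hd). pose proof hN as (_&_&_&hI3&_).
    assert (hi : indep N (remx B1 x)).
    { apply (indep_sub hN (base_indep hB1)). set_unfold; tauto. }
    destruct (hI3 _ _ hi (remx_not_base hB1 hx) hB') as (z&hz&hnz&hiz).
    assert (hzx : z <> x). { intro; subst. apply (hd x); [left; auto|auto]. }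
    assert (hBz : ~ B1 z). { intro h. apply hnz. split; auto. }
    apply (hd z); auto. right; auto.
  - intros D hD hnD. apply not_all_ex_not in hnD. destruct hnD as (c&hc).
    apply imply_to_and in hc. destruct hc as (hCc&hDc).
    split; [intros y _; apply hG|].
    destruct hCc as [hc|(hBc&hic)].
    + subst c. exists B1. split; auto. intros y hy. destruct (hD y hy) as [h|(h&_)]; auto.
      subst; tauto.
    + exists (setU (remx B1 x) (set1 c)). split; [apply (base_exchange hN); auto|].
      intros y hy hB'. destruct (hD y hy) as [h|(h&_)].
      * subst y. destruct hB' as [(_&h')|h']; auto. unfold set1 in h'. subst. tauto.
      * destruct hB' as [(h'&_)|h']; auto. unfold set1 in h'. subst; tauto.
  - left; auto.
  - intros y [h|(h1&h2)] hyx; [tauto|]. apply hQ; auto.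
Qed.

(** Conversely, a dual circuit through [x] yields such a base: remove [x]
    from the circuit, take a base avoiding the rest, and check exchanges. *)
Lemma exchange_of_dspan X x : span (dual N) X x -> ~ X x -> exchange_closed X x.
Proof.
  intros (_&[hX|(C&hC&hCx&hCX)]) hnX; [tauto|].
  destruct hC as (hCs&hCdep&hCmin).
  assert (hi : indep (dual N) (remx C x)).
  { apply hCmin; [set_unfold; tauto|]. intro h. destruct (h x hCx); auto. }
  destruct hi as (_&B1&hB1&hd).
  assert (hB1x : B1 x).
  { apply NNPP; intro h. apply hCdep. split; auto. exists B1. split; auto.
    intros y hy. destruct (classic (y = x)); [subst; auto|apply hd; split; auto]. }
  exists B1. split; auto. split; auto.
  intros z hz hiz.
  assert (hzx : z <> x) by (intro; subst; auto).
  pose proof (base_exchange hN B1 x z hB1 hB1x hz hiz) as hB'.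
  apply NNPP; intro hXz. apply hCdep. split; auto. eexists; split; [exact hB'|].
  intros y hy [(h1&h2)|h1].
  - apply (hd y); auto. split; auto.
  - unfold set1 in h1. subst y. apply hXz. apply hCX; auto.
Qed.

(** For a base [B1] as in [exchange_closed], [B1 - x] is a maximal
    independent subset of [(E - X - x) + (B1 - x)] over which [x] stays
    independent; then shrink the contracted set. *)
Lemma coloop_of_exchange X x : ~ X x -> exchange_closed X x -> coloop_rel X x.
Proof.
  intros hnX (B1&hB1&hx&hQ).
  set (T' := fun z => (~ X z /\ z <> x) \/ (B1 z /\ z <> x)).
  assert (hm : max_indep N T' (remx B1 x)).
  { split; [apply (indep_sub hN (base_indep hB1)); set_unfold; tauto|].
    split; [unfold T'; set_unfold; tauto|].
    intros J' hJ' hs hs' w hw. destruct (hs' w hw) as [(h1&h2)|h]; auto.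
    destruct (classic (B1 w)) as [hb|hb]; [split; auto|].
    exfalso. apply h1. apply hQ; auto. apply (indep_sub hN hJ').
    set_unfold. intros y [h|h]; subst; auto. }
  unfold coloop_rel. apply (contr_indep_mono hN T').
  - unfold T'; set_unfold; auto.
  - refine (contr_indep_intro hN T' _ _ _ hm _).
    + intros y h. unfold set1 in h. subst. split; [apply hG|].
      intros [(_&h)|(_&h)]; auto.
    + apply (indep_sub hN (base_indep hB1)). set_unfold. intros y [h|(h&_)]; subst; auto.
Qed.

(** Conversely, extend [x] plus a maximal independent subset [J] of
    [E - X - x] to a maximal independent subset of [J + x + X]: it is a base
    whose exchanges for [x] lie in [X]. *)
Lemma exchange_of_coloop X x : coloop_rel X x -> exchange_closed X x.
Proof.
  intros hCL. set (T := fun z => ~ X z /\ z <> x).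
  destruct (max_indep_exists hN T) as (J&hJ).
  pose proof (contr_indep_union hN T _ J hCL hJ) as hi.
  pose proof hJ as (hJi&hJT&hJm).
  destruct (max_indep_extend hN _ (fun z => J z \/ z = x \/ X z) hi) as (K&hK&hs).
  { set_unfold. intros y [h|h]; auto. }
  pose proof hK as (hKi&hKX&hKm).
  assert (hJK : subset J K) by (intros y hy; apply hs; right; auto).
  assert (hKx : K x) by (apply hs; left; reflexivity).
  assert (hb : base N K).
  { apply (base_of_no_extension hN); auto. intros w hw.
    destruct (classic (J w \/ w = x \/ X w)) as [h|h].
    - apply (hKm _ hw); set_unfold; auto. intros y [h'|h']; subst; auto.
    - exfalso. apply h. left. apply (hJm (setU J (set1 w))); set_unfold; auto.
      + apply (indep_sub hN hw). set_unfold. intros y [h'|h']; subst; auto.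
      + intros y [h'|h']; [auto|]. subst. split; intro; apply h; auto. }
  exists K. split; auto. split; auto.
  intros z hz hiz. apply NNPP; intro hXz.
  assert (hzx : z <> x) by (intro; subst; auto).
  apply hz. apply hJK. apply (hJm (setU J (set1 z))); set_unfold; auto.
  - apply (indep_sub hN hiz). set_unfold. intros y [h|h]; subst; auto.
    left. split; auto. apply hJT in h. destruct h; auto.
  - intros y [h|h]; subst; auto. unfold T; auto.
Qed.

Lemma max_indep_contains_coloop L K q :
  max_indep N L K -> L q -> indep (contr N (remx L q)) (set1 q) -> K q.
Proof.
  intros hK hLq hq. apply NNPP; intro hKq. pose proof hK as (hKi&hKL&hKm).
  assert (hK' : max_indep N (remx L q) K).
  { split; auto. split.
    - intros y hy. split; auto. intro; subst; auto.
    - intros J' hJ' h1 h2. apply hKm; auto. intros y hy. apply h2; auto. }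
  apply hKq. apply (hKm _ (contr_indep_union hN _ _ _ hq hK')); set_unfold; auto.
  intros y [h|h]; subst; auto.
Qed.

(** Transitivity of the dual span, in its [coloop_rel] form. *)
Lemma coloop_trans X Y x :
  ~ X x -> ~ Y x -> coloop_rel Y x -> (forall y, Y y -> ~ X y -> coloop_rel X y) ->
  coloop_rel X x.
Proof.
  intros hXx hYx hCY hCX.
  set (P := fun z => ~ X z /\ z <> x /\ ~ Y z).
  set (Qs := fun z => Y z /\ ~ X z).
  set (L := fun z => P z \/ Qs z \/ z = x).
  assert (hxP : indep (contr N P) (set1 x)).
  { apply (contr_indep_mono hN (fun z => ~ Y z /\ z <> x)); [|exact hCY].
    intros z (h1&h2&h3). split; auto. }
  destruct (max_indep_exists hN P) as (JP&hJP). pose proof hJP as (hJPi&hJPs&hJPm).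
  destruct (max_indep_extend hN _ L (contr_indep_union hN _ _ _ hxP hJP)) as (K&hK&hs).
  { unfold L; set_unfold. intros y [h|h]; auto. }
  assert (hQ : subset Qs K).
  { intros q hq. apply (max_indep_contains_coloop L K q hK); [unfold L; auto|].
    apply (contr_indep_mono hN (fun z => ~ X z /\ z <> q)); [|exact (hCX q (proj1 hq) (proj2 hq))].
    intros z ([h|[h|h]]&hzq).
    - destruct h as (h1&h2&h3). split; auto.
    - destruct h as (h1&h2). split; auto.
    - subst. split; auto. }
  set (JQ := setU JP Qs).
  assert (hmQ : max_indep N (fun z => ~ X z /\ z <> x) JQ).
  { apply (max_indep_union hN P); auto.
    - apply (indep_sub hN (proj1 hK)). unfold JQ; set_unfold. intros y [h|h]; auto.
    - intros y (h1&h2&_). split; auto.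
    - intros y (h1&h2). split; auto. intro; subst; auto.
    - intros w (hw1&hw2) hq. split; auto. split; auto. intro hYw. apply hq. split; auto. }
  refine (contr_indep_intro hN _ _ JQ _ hmQ _).
  - intros y h. unfold set1 in h. subst. split; [apply hG|]. intros (_&h); auto.
  - apply (indep_sub hN (proj1 hK)). unfold JQ; set_unfold.
    intros y [h|[h|h]]; subst; auto.
Qed.

Lemma dspan_trans X Y x :
  span (dual N) Y x -> (forall y, Y y -> span (dual N) X y) -> span (dual N) X x.
Proof.
  intros hY hYX.
  destruct (classic (X x)) as [hXx|hXx]; [split; [apply hG|left; auto]|].
  destruct (classic (Y x)) as [hYx|hYx]; [auto|].
  apply dspan_of_exchange, exchange_of_coloop.
  apply (coloop_trans X Y x hXx hYx).
  - exact (coloop_of_exchange _ _ hYx (exchange_of_dspan _ _ hY hYx)).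
  - intros y hy hXy. exact (coloop_of_exchange _ _ hXy (exchange_of_dspan _ _ (hYX y hy) hXy)).
Qed.

End DualSpan.

Arguments exchange_closed {E} N X x.
Arguments coloop_rel {E} N X x.

(** Let [B ∈ B(M,N,W)] with [W = W(M,N)].  Any wave [Y] of [(M/B,N/B)]
    glues to [W] into the wave [W + Y] of [(M,N)], so [Y ⊆ W - B].  On
    [W - B], [M/B] consists of loops (by maximality of [B] in [M|W]) and
    [N/B] has rank zero after contracting the complement (by maximality of
    [B] in [N.W]); this gives [cond⁺(M/B,N/B)]. *)
Section Waves.
Context {E : Type} {M N : matroid E} (hM : is_matroid M) (hN : is_matroid N).
Implicit Types (W Y B BY J K : E -> Prop).

Lemma Wmax_ground : subset (Wmax M N) (ground M).
Proof. intros x (W&(hW&_)&hx). auto. Qed.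

Lemma wave_union_base W Y B BY :
  base (restr M W) B -> base (restr (contr M B) Y) BY ->
  base (restr M (setU W Y)) (setU B BY).
Proof.
  rewrite !max_indep_restr. intros (hBi&hBW&hBm) (hBYi&hBYY&hBYm).
  apply (contr_indep_iff hM B BY hBi) in hBYi. destruct hBYi as (hdisj&hBYB).
  split; [apply (indep_sub hM hBYB); set_unfold; tauto|].
  split; [set_unfold; intros x [h|h]; auto|].
  intros K hK hs hKWY k hk.
  destruct (classic (B k)) as [h|hnB]; [left; auto|right].
  destruct (hKWY k hk) as [hWk|hYk].
  - exfalso. apply hnB. apply (hBm (setU B (set1 k))); set_unfold; auto.
    + apply (indep_sub hM hK). set_unfold. intros z [h|h]; subst; auto.
    + intros z [h|h]; subst; auto.
  - apply (hBYm (setU BY (set1 k))); set_unfold; auto.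
    + apply (contr_indep_iff hM B _ hBi). split.
      * set_unfold. intros z [h|h]; subst; auto.
      * apply (indep_sub hM hK). set_unfold. intros z [[h|h]|h]; subst; auto.
    + intros z [h|h]; subst; auto.
Qed.

Lemma wave_union_indep W Y B BY :
  indep (contr_to N W) B -> indep (contr_to (contr N B) Y) BY ->
  indep (contr_to N (setU W Y)) (setU B BY).
Proof.
  unfold contr_to. intros hB hBY.
  pose proof (contr_indep_sub hN _ _ hB) as hBi.
  pose proof (contr_matroid hN B hBi) as hNB.
  destruct (max_indep_exists hN (setC (setU W Y))) as (J0&hJ0).
  pose proof hJ0 as (hJ0i&hJ0s&_).
  destruct (max_indep_extend hN J0 (setC W) hJ0i) as (J1&hJ1&hs01).
  { intros z hz h. apply (hJ0s z hz). left; auto. }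
  pose proof (contr_indep_union hN _ _ _ hB hJ1) as hBJ1.
  assert (hJ0B : indep (contr N B) J0).
  { apply (contr_indep_iff hN B J0 hBi). split.
    - intros z hz hBz. apply (proj2 (contr_indep_ground _ _ hB z hBz)).
      intro hW. apply (hJ0s z hz). left; exact hW.
    - apply (indep_sub hN hBJ1). set_unfold. intros z [h|h]; auto. }
  destruct (max_indep_extend hNB J0 (setC Y) hJ0B) as (J2&hJ2&hs02).
  { intros z hz h. apply (hJ0s z hz). right; auto. }
  pose proof (contr_indep_union hNB _ _ _ hBY hJ2) as hBYJ2.
  apply (contr_indep_iff hN B _ hBi) in hBYJ2. destruct hBYJ2 as (_&hBYJ2).
  refine (contr_indep_intro hN _ _ J0 _ hJ0 _).
  - intros z [h|h].
    + destruct (contr_indep_ground _ _ hB z h) as (hg&hW).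
      split; auto. intro hn. apply hn. left. apply NNPP; auto.
    + destruct (contr_indep_ground _ _ hBY z h) as ((hg&_)&hY).
      split; auto. intro hn. apply hn. right. apply NNPP; auto.
  - apply (indep_sub hN hBYJ2). set_unfold. intros z [[h|h]|h]; auto.
Qed.

Lemma wave_union W Y B :
  subset W (ground M) -> base (restr M W) B -> indep (contr_to N W) B ->
  wave (contr M B) (contr N B) Y -> wave M N (setU W Y).
Proof.
  intros hW hB hBN (hYg&BY&hBY&hBYN). split.
  - intros x [h|h]; [auto|exact (proj1 (hYg x h))].
  - exists (setU B BY). split.
    + exact (wave_union_base _ _ _ _ hB hBY).
    + exact (wave_union_indep _ _ _ _ hBN hBYN).
Qed.

Lemma contr_wave_in_Wmax B Y :
  Bset M N (Wmax M N) B -> wave (contr M B) (contr N B) Y ->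
  forall y, Y y -> Wmax M N y /\ ~ B y.
Proof.
  intros [hB hBN] hY y hy. split.
  - exists (setU (Wmax M N) Y). split; [|right; auto].
    exact (wave_union _ _ _ Wmax_ground hB (base_indep hBN) hY).
  - exact (proj2 (proj1 hY y hy)).
Qed.

Lemma base_restr_contr_loop W B y :
  base (restr M W) B -> ground M y -> W y -> ~ B y -> loop (contr M B) y.
Proof.
  rewrite max_indep_restr. intros (hBi&hBW&hBm) hg hW hnB. split; [split; auto|].
  intro hy. apply hnB. apply (contr_indep_iff hM B _ hBi) in hy. destruct hy as (_&hy).
  apply (hBm _ hy); set_unfold; auto. intros z [h|h]; subst; auto.
Qed.

Lemma contr_base_rank0 W B Y :
  base (contr_to N W) B -> (forall y, Y y -> W y /\ ~ B y) ->
  base (contr_to (contr N B) Y) (@set0 E).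
Proof.
  unfold contr_to. intros [hB hBm] hY.
  pose proof (contr_indep_sub hN _ _ hB) as hBi.
  pose proof (contr_matroid hN B hBi) as hNB.
  destruct (max_indep_exists hN (setC W)) as (J1&hJ1).
  pose proof (contr_indep_union hN _ _ _ hB hJ1) as hBJ1.
  assert (hJ1B : max_indep (contr N B) (setC W) J1).
  { apply (max_indep_contr hN); auto.
    - intros z hz hBz. apply (proj2 (contr_indep_ground _ _ hB z hBz)).
      exact (proj1 (proj2 hJ1) z hz).
    - apply (indep_sub hN hBJ1). set_unfold. tauto. }
  split; [apply (contr_indep_empty hNB)|].
  intros K hK _ k hk. exfalso.
  destruct (contr_indep_ground _ _ hK k hk) as ((hg&_)&hYk).
  apply NNPP in hYk. destruct (hY k hYk) as (hWk&hBk). apply hBk.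
  (* [K] is independent in [(N/B)/(E - W)], hence so is [B + k] in [N/(E - W)] *)
  assert (hKW : indep (contr (contr N B) (setC W)) K).
  { apply (contr_indep_mono hNB (setC Y)); auto. intros z hz h. apply hz. apply (hY z h). }
  pose proof (contr_indep_union hNB _ _ _ hKW hJ1B) as hKJ1.
  apply (contr_indep_iff hN B _ hBi) in hKJ1. destruct hKJ1 as (_&hKJ1).
  apply (hBm (setU B (set1 k))); set_unfold; auto.
  refine (contr_indep_intro hN _ _ J1 _ hJ1 _).
  - intros z [h|h]; [exact (contr_indep_ground _ _ hB z h)|subst]. split; auto.
  - apply (indep_sub hN hKJ1). set_unfold. intros z [[h|h]|h]; subst; auto.
Qed.

Lemma cond_after_base B :
  Bset M N (Wmax M N) B -> cond (contr M B) (contr N B) /\ cond_plus (contr M B) (contr N B).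
Proof.
  intros hB. pose proof hB as [hBM hBN]. split.
  - intros Y hY. exists (@set0 E). split.
    + exact (contr_base_rank0 _ _ _ hBN (contr_wave_in_Wmax _ _ hB hY)).
    + apply (contr_indep_empty hM).
  - split.
    + intros y (Y&hY&hy). destruct (contr_wave_in_Wmax _ _ hB hY y hy) as (hW&hnB).
      exact (base_restr_contr_loop _ _ _ hBM (Wmax_ground y hW) hW hnB).
    + apply (contr_base_rank0 _ _ _ hBN). intros y (Y&hY&hy).
      exact (contr_wave_in_Wmax _ _ hB hY y hy).
Qed.

End Waves.

(** With [Z = I + B]: the elements of [W - B] are loops of
    [M/Z], hence lie in [span° M Z]; each [b ∈ B] lies in the [N]-dual span
    of [W - B], as [B] extends to a base of [N] in which [b] can only be
    exchanged against elements of [W - B]; finally elements of [I] reach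
    [span° M Z] through [span° M I ⊆ span° M Z + B] and transitivity of the
    dual span. *)

Lemma base_exchange_in_wave {E : Type} {N : matroid E} (hN : is_matroid N) I W B b :
  indep N I -> base (contr_to (contr N I) W) B -> B b ->
  exchange_closed N (fun z => W z /\ ~ B z) b.
Proof.
  unfold contr_to. intros hI hB hb.
  pose proof (contr_matroid hN I hI) as hN'.
  destruct (max_indep_exists hN' (setC W)) as (J1&hJ1). pose proof hJ1 as (_&hJ1s&hJ1m).
  pose proof (base_contr_union hN' _ _ _ hB hJ1) as hBJ1.
  apply (contr_base_iff hN I _ hI) in hBJ1. destruct hBJ1 as (hdI&hB0).
  assert (hWb : W b) by exact (NNPP _ (proj2 (contr_indep_ground _ _ (base_indep hB) b hb))).
  exists (setU (setU B J1) I). split; [auto|split; [left; left; auto|]].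
  intros z hz hiz. split; [|intro; apply hz; left; left; auto].
  apply NNPP; intro hWz. apply hz. left; right.
  apply (hJ1m (setU J1 (set1 z))); set_unfold; auto.
  - apply (contr_indep_iff hN I _ hI). split.
    + intros y [h|h]; [apply (hdI y); right; auto|subst; intro; apply hz; right; auto].
    + apply (indep_sub hN hiz). intros y [[h|h]|h]; [left; split| |left; split].
      * left; right; auto.
      * intro; subst. exact (hJ1s b h hWb).
      * subst; right; reflexivity.
      * right; auto.
      * intro; subst. exact (hdI b (or_introl hb) h).
  - intros y [h|h]; subst; auto.
Qed.

Lemma dually_safe_after_base {E : Type} {M N : matroid E} I B :
  is_matroid M -> is_matroid N -> (forall x, ground N x) ->
  indep M I -> indep N I -> dually_safe M N I ->
  Bset (contr M I) (contr N I) (Wmax (contr M I) (contr N I)) B ->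
  dually_safe M N (setU I B).
Proof.
  intros hM hN gN hIM hIN hDS [hBM hBN].
  set (W := Wmax (contr M I) (contr N I)) in *.
  pose proof (contr_matroid hM I hIM) as hM'.
  assert (hBi : indep (contr M I) B) by exact (proj1 (proj1 hBM)).
  pose proof (indep_union_of_contr hM I B hIM hBi) as hZ.
  assert (hWB : forall y, W y /\ ~ B y -> spano M (setU I B) y).
  { intros y (hW&hnB). apply (loop_contr_spano hM _ _ hZ).
    rewrite <- (contr_contr hM I B hIM hBi).
    exact (base_restr_contr_loop hM' _ _ _ hBM (Wmax_ground y hW) hW hnB). }
  assert (hBsp : forall b, B b -> span (dual N) (spano M (setU I B)) b).
  { intros b hb. apply (span_mono (M := dual N) _ _ _ hWB).
    exact (dspan_of_exchange hN gN _ _ (base_exchange_in_wave hN I W B b hIN hBN hb)). }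
  intros x [hxI|hxB] hE1; [|auto].
  apply (dspan_trans hN gN _ (spano M I) _ (hDS x hxI hE1)).
  intros y (hsp&hIy). destruct (classic (B y)) as [hBy|hBy]; [auto|].
  split; [apply gN|left]. split.
  - apply (span_mono _ _ _ (fun z h => or_introl h) hsp).
  - intros [h|h]; auto.
Qed.

Theorem mainTheorem12 (E : Type) (M N : matroid E) (I B : E -> Prop) :
  countable_type E ->
  is_matroid M -> is_matroid N ->
  (forall x, ground M x) -> (forall x, ground N x) ->
  finitary M -> fin_cofin_sum N ->
  indep M I -> indep N I -> dually_safe M N I ->
  Bset (contr M I) (contr N I) (Wmax (contr M I) (contr N I)) B ->
  nice_feasible M N (setU I B) /\ dually_safe M N (setU I B).
Proof.
  intros _ hM hN _ gN _ _ hIM hIN hDS hB.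
  pose proof (contr_matroid hM I hIM) as hM'.
  pose proof (contr_matroid hN I hIN) as hN'.
  pose proof hB as [hBM hBN].
  assert (hBiM : indep (contr M I) B) by exact (proj1 (proj1 hBM)).
  assert (hBiN : indep (contr N I) B) by exact (contr_indep_sub hN' _ _ (base_indep hBN)).
  destruct (cond_after_base hM' hN' B hB) as [hcond hplus].
  rewrite (contr_contr hM I B hIM hBiM), (contr_contr hN I B hIN hBiN) in hcond, hplus.
  split; [split; [split; [|split]|]|]; auto.
  - exact (indep_union_of_contr hM I B hIM hBiM).
  - exact (indep_union_of_contr hN I B hIN hBiN).
  - exact (dually_safe_after_base I B hM hN gN hIM hIN hDS hB).
Qed.
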